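(* Let $\mathsf{M}$ be a finite set of $N\ge1$ elements and let $\mathcal{C}$ be the set of all clusterings (partitions into nonempty blocks) of $\mathsf{M}$. The proposal kernel $\phi_Y$ on $\mathcal{C}$ described in the context is irreducible.
   Context: Proposal kernel $\phi_Y(\mathbf{A},\mathbf{A}')$ with parameter $\theta_1>0$: given $\mathbf{A}=\{A_1,\dots,A_n\}$, choose a cluster $A_i$ uniformly at random; choose $k\in\{1,\dots,|A_i|\}$ according to the truncated exponential distribution $PE(k;\theta_1)=\frac{1-e^{-\theta_1}}{e^{-\theta_1}}\sum_{m=1}^\infty\exp[-\theta_1((m-1)|A_i|+k)]$; choose a subset of $k$ points of $A_i$ uniformly at random among the $\binom{|A_i|}{k}$ subsets; choose $A_j$ uniformly at random from $(\mathbf{A}\setminus\{A_i\})\cup\{B\}$ where $B$ is an empty set representing a new cluster; move the chosen points from $A_i$ to $A_j$ (discarding $A_i$ if it becomes empty). The resulting clustering is $\mathbf{A}'$. Irreducible means: for every $\mathbf{A},\mathbf{A}'\in\mathcal{C}$ there is $m$ with positive $m$-step transition probability from $\mathbf{A}$ to $\mathbf{A}'$. *)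

From HB Require Import structures.
From mathcomp Require Import all_boot all_order all_algebra.
From mathcomp Require Import all_classical all_reals all_analysis.
Set Implicit Arguments. Unset Strict Implicit. Unset Printing Implicit Defensive.
Import Order.TTheory GRing.Theory Num.Theory.
Local Open Scope ring_scope.

(* A clustering of the finite ground set M = [set: T]: a partition of M into
   nonempty blocks (MathComp's [partition] requires set0 \notin P). *)
Definition clustering (T : finType) (A : {set {set T}}) : bool :=
  finset.partition A [set: T].

Definition PE (R : realType) (theta : R) (n k : nat) : R :=
  (1 - expR (- theta)) / expR (- theta) *
  limn (fun N => \sum_(m < N) expR (- theta * ((m * n + k)%N)%:R)).

(* Result of moving the points S (subset of Ai) to the target cluster:
   [None] is the new empty cluster B, [Some Aj] an existing cluster Aj != Ai.
   Ai is discarded if it becomes empty. *)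
Definition move_pts (T : finType) (A : {set {set T}}) (Ai S : {set T})
    (j : option {set T}) : {set {set T}} :=
  let rest := if Ai :\: S == finset.set0 then finset.set0 else [set Ai :\: S] in
  match j with
  | None => ((A :\ Ai) :|: rest) :|: [set S]
  | Some Aj => (((A :\ Ai) :\ Aj) :|: rest) :|: [set Aj :|: S]
  end.

(* One-step transition probability phi_Y(A, A') of the proposal kernel:
   Ai uniform among the #|A| clusters; k ~ PE(.;theta) on 1..|Ai|; S uniform
   among the 'C(|Ai|,k) k-subsets of Ai; target uniform among the
   #|A| - 1 + 1 = #|A| elements of (A \ {Ai}) u {B}. *)
Definition phiY (R : realType) (theta : R) (T : finType)
    (A A' : {set {set T}}) : R :=
  \sum_(Ai in A) (#|A|%:R)^-1 *
   \sum_(1 <= k < #|Ai|.+1) PE theta #|Ai| k *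
    \sum_(S in finset.powerset Ai | #|S| == k) ('C(#|Ai|, k)%:R)^-1 *
     ((\sum_(Aj in A :\ Ai)
         (#|A|%:R)^-1 * (move_pts A Ai S (Some Aj) == A')%:R)
      + (#|A|%:R)^-1 * (move_pts A Ai S None == A')%:R).

Fixpoint phiY_n (R : realType) (theta : R) (T : finType) (m : nat)
    (A A' : {set {set T}}) : R :=
  match m with
  | 0 => (A == A')%:R
  | m'.+1 => \sum_(B : {set {set T}} | clustering B)
               phiY theta A B * phiY_n theta m' B A'
  end.

From HB Require Import structures.
From mathcomp Require Import all_boot all_order all_algebra.
From mathcomp Require Import all_classical all_reals all_analysis.
(* Re-imported so that [set0], [setDv], ... denote the finset notions, not
   their classical_sets homonyms. *)
From mathcomp Require Import finset.
Import Order.TTheory GRing.Theory Num.Theory.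
Local Open Scope ring_scope.

Set Implicit Arguments. Unset Strict Implicit. Unset Printing Implicit Defensive.

(* Every move that picks a nonempty subset of a block and a target has
   positive probability, because PE is positive on 1..|A_i|.  Moving a whole
   block into another one merges the two, so every clustering reaches the
   one-block clustering {M} by merges; conversely, moving a block A_i out of
   the merged block A_j u A_i to the new empty cluster undoes that merge, so
   {M} reaches every clustering by splits.  Chaining the two paths through {M}
   gives irreducibility. *)

Lemma psumr_gt0 (R : numDomainType) (I : eqType) (r : seq I) (P : pred I)
    (F : I -> R) (i0 : I) :
  (forall i, P i -> 0 <= F i) -> i0 \in r -> P i0 -> 0 < F i0 ->
  0 < \sum_(i <- r | P i) F i.
Proof.
move=> F_ge0 r_i0 P_i0 F_i0_gt0.
rewrite lt0r psumr_neq0 // sumr_ge0 // andbT.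
by apply/hasP; exists i0; rewrite ?P_i0.
Qed.

Lemma PE_closed_form (R : realType) (theta : R) n k :
  0 < theta -> (0 < n)%N ->
  PE theta n k = (1 - expR (- theta)) / expR (- theta) *
                 (expR (- theta) ^+ k / (1 - expR (- theta) ^+ n)).
Proof.
move=> theta_gt0 n_gt0; set q := expR (- theta).
have q_ge0 : 0 <= q by exact: expR_ge0.
have qn_lt1 : `|q ^+ n| < 1.
  by rewrite ger0_norm ?exprn_ge0 // exprn_ilt1 -?lt0n // expR_lt1 oppr_lt0.
rewrite /PE; have -> : (fun N => \sum_(m < N) expR (- theta * (m * n + k)%:R)) =
                       series (geometric (q ^+ k) (q ^+ n)).
  apply/funext => N; rewrite /series /= big_mkord; apply: eq_bigr => m _.
  by rewrite mulrC expRM_natl -/q exprD mulnC exprM mulrC.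
congr (_ * _); apply: (@cvg_lim R^o) => //.
exact: cvg_geometric_series.
Qed.

Lemma PE_gt0 (R : realType) (theta : R) n k :
  0 < theta -> (0 < n)%N -> 0 < PE theta n k.
Proof.
move=> theta_gt0 n_gt0; rewrite PE_closed_form //.
have q_gt0 : 0 < expR (- theta) by exact: expR_gt0.
have q_lt1 : expR (- theta) < 1 by rewrite expR_lt1 oppr_lt0.
rewrite !mulr_gt0 ?invr_gt0 ?exprn_gt0 ?subr_gt0 //.
by rewrite exprn_ilt1 ?ltW // -lt0n.
Qed.

Section Kernel.

Variables (R : realType) (theta : R) (T : finType).
Hypothesis theta_gt0 : 0 < theta.

Implicit Types (A B C : {set {set T}}) (Ai Aj S : {set T}).

Definition target_mass A Ai S C : R :=
  \sum_(Aj in A :\ Ai) (#|A|%:R)^-1 * (move_pts A Ai S (Some Aj) == C)%:R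
  + (#|A|%:R)^-1 * (move_pts A Ai S None == C)%:R.

Definition subset_mass A Ai k C : R :=
  \sum_(S in powerset Ai | #|S| == k) ('C(#|Ai|, k)%:R)^-1 * target_mass A Ai S C.

Definition block_mass A Ai C : R :=
  \sum_(1 <= k < #|Ai|.+1) PE theta #|Ai| k * subset_mass A Ai k C.

Lemma phiYE A C : phiY theta A C = \sum_(Ai in A) (#|A|%:R)^-1 * block_mass A Ai C.
Proof. by []. Qed.

Lemma target_mass_ge0 A Ai S C : 0 <= target_mass A Ai S C.
Proof. by rewrite addr_ge0 ?sumr_ge0 // => *; rewrite mulr_ge0 ?invr_ge0. Qed.

Lemma subset_mass_ge0 A Ai k C : 0 <= subset_mass A Ai k C.
Proof. by rewrite sumr_ge0 // => *; rewrite mulr_ge0 ?invr_ge0 ?target_mass_ge0. Qed.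

Lemma block_mass_ge0 A Ai C : 0 <= block_mass A Ai C.
Proof.
rewrite /block_mass big_nat sumr_ge0 // => k /andP[k_gt0 k_le].
by rewrite mulr_ge0 ?subset_mass_ge0 // ltW // PE_gt0 // (leq_trans k_gt0).
Qed.

Lemma phiY_ge0 A C : 0 <= phiY theta A C.
Proof. by rewrite phiYE sumr_ge0 // => *; rewrite mulr_ge0 ?invr_ge0 ?block_mass_ge0. Qed.

Definition admissible_target A Ai (j : option {set T}) : bool :=
  if j is Some Aj then Aj \in A :\ Ai else true.

Lemma phiY_move_gt0 A Ai S j :
  Ai \in A -> S \subset Ai -> (0 < #|S|)%N -> admissible_target A Ai j ->
  0 < phiY theta A (move_pts A Ai S j).
Proof.
move=> A_Ai sub_S_Ai S_gt0 adm_j.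
have A_gt0 : 0 < (#|A|%:R : R)^-1.
  by rewrite invr_gt0 ltr0n; apply/card_gt0P; exists Ai.
have S_le : (#|S| <= #|Ai|)%N by exact: subset_leq_card.
have target_gt0 : 0 < target_mass A Ai S (move_pts A Ai S j).
  rewrite /target_mass; case: j adm_j => [Aj A_Aj|_].
    apply: ltr_wpDr; first by rewrite mulr_ge0 ?invr_ge0.
    apply: (psumr_gt0 (i0 := Aj)); rewrite ?mem_index_enum ?eqxx ?mulr1 //.
  apply: ltr_wpDl; last by rewrite eqxx mulr1.
  by rewrite sumr_ge0 // => Aj _; rewrite mulr_ge0 ?invr_ge0.
rewrite phiYE; apply: (psumr_gt0 (i0 := Ai)); rewrite ?mem_index_enum //.
  by move=> Ai' _; rewrite mulr_ge0 ?invr_ge0 ?block_mass_ge0.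
rewrite mulr_gt0 // /block_mass big_nat.
apply: (psumr_gt0 (i0 := #|S|)); rewrite ?mem_index_iota ?S_gt0 ?ltnS //.
  move=> k /andP[k_gt0 k_le].
  by rewrite mulr_ge0 ?subset_mass_ge0 // ltW // PE_gt0 // (leq_trans k_gt0).
rewrite mulr_gt0 ?PE_gt0 ?(leq_trans S_gt0) //.
apply: (psumr_gt0 (i0 := S)); rewrite ?mem_index_enum ?powersetE ?sub_S_Ai ?eqxx //.
  by move=> S' _; rewrite mulr_ge0 ?invr_ge0 ?target_mass_ge0.
by rewrite mulr_gt0 // invr_gt0 ltr0n bin_gt0.
Qed.

Lemma phiY_n_ge0 m A C : 0 <= phiY_n theta m A C.
Proof.
elim: m A => [|m IH] A /=; first by rewrite ler0n.
by rewrite sumr_ge0 // => B _; rewrite mulr_ge0 ?phiY_ge0.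
Qed.

Lemma phiY_n_addn m n A C : clustering A ->
  phiY_n theta (m + n) A C =
  \sum_(B | clustering B) phiY_n theta m A B * phiY_n theta n B C.
Proof.
elim: m A => [|m IH] A cA /=.
  rewrite (bigD1 A) //= eqxx mul1r big1 ?addr0 // => B /andP[_ neq_BA].
  by rewrite eq_sym (negbTE neq_BA) mul0r.
under eq_bigr => B cB do rewrite IH // big_distrr.
rewrite exchange_big /=; apply: eq_bigr => D _.
by rewrite mulr_suml; apply: eq_bigr => B _; rewrite mulrA.
Qed.

Lemma phiY_n1 A C : clustering C -> phiY_n theta 1 A C = phiY theta A C.
Proof.
move=> cC /=; rewrite (bigD1 C) //= eqxx mulr1 big1 ?addr0 // => B /andP[_ neq_BC].
by rewrite (negbTE neq_BC) mulr0.
Qed.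

Definition reachable A C := exists m, 0 < phiY_n theta m A C.

Lemma reachable_refl A : reachable A A.
Proof. by exists 0%N; rewrite /= eqxx ltr01. Qed.

Lemma reachable_step A C : clustering C -> 0 < phiY theta A C -> reachable A C.
Proof. by move=> cC phi_gt0; exists 1%N; rewrite phiY_n1. Qed.

Lemma reachable_trans A B C : clustering A -> clustering B ->
  reachable A B -> reachable B C -> reachable A C.
Proof.
move=> cA cB [m AB_gt0] [n BC_gt0]; exists (m + n)%N.
rewrite phiY_n_addn // (psumr_gt0 (i0 := B)) ?mem_index_enum ?mulr_gt0 //.
by move=> D _; rewrite mulr_ge0 ?phiY_n_ge0.
Qed.

Definition merge_blocks A Ai Aj := (Aj :|: Ai) |: ((A :\ Ai) :\ Aj).

Lemma move_pts_merge A Ai Aj : move_pts A Ai Ai (Some Aj) = merge_blocks A Ai Aj.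
Proof. by rewrite /move_pts setDv eqxx setU0 setUC. Qed.

Section TwoBlocks.

Variables (A : {set {set T}}) (Ai Aj : {set T}).
Hypotheses (cA : clustering A) (A_Ai : Ai \in A) (A_Aj : Aj \in A) (neq_ij : Ai != Aj).

Let A_Aj' : Aj \in A :\ Ai.
Proof. by rewrite !inE eq_sym neq_ij. Qed.

Lemma clustering_merge : clustering (merge_blocks A Ai Aj).
Proof.
rewrite /clustering; have part_rest := partitionD1 (partitionD1 cA A_Ai) A_Aj'.
have Aij_neq0 : Aj :|: Ai != set0 by rewrite setU_eq0 negb_and (partition_neq0 cA A_Aj).
have disj : [disjoint Aj :|: Ai & ([set: T] :\: Ai) :\: Aj].
  by rewrite -setI_eq0; apply/eqP/setP => x; rewrite !inE; case: (x \in Ai); case: (x \in Aj).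
have -> : [set: T] = (Aj :|: Ai) :|: (([set: T] :\: Ai) :\: Aj).
  by apply/setP => x; rewrite !inE; case: (x \in Ai); case: (x \in Aj).
exact: partitionU1 part_rest Aij_neq0 disj.
Qed.

Lemma card_merge_lt : (#|merge_blocks A Ai Aj| < #|A|)%N.
Proof.
rewrite cardsU1 (cardsD1 Ai A) A_Ai (cardsD1 Aj (A :\ Ai)) A_Aj'.
by case: (_ \notin _).
Qed.

Lemma move_pts_split : move_pts (merge_blocks A Ai Aj) (Aj :|: Ai) Ai None = A.
Proof.
have disjA := trivIsetP (partition_trivIset cA).
have Ai_neq0 := partition_neq0 cA A_Ai.
have Aij_Ai : (Aj :|: Ai) :\: Ai = Aj.
  rewrite setDUl setDv setU0; apply/setDidPl.
  by apply: disjA; rewrite // eq_sym.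
have Aij_notin : Aj :|: Ai \notin (A :\ Ai) :\ Aj.
  rewrite !inE; apply/negP => /and3P[_ neq_Ai A_Aij].
  have := disjA _ _ A_Aij A_Ai neq_Ai.
  by rewrite -setI_eq0 (setIidPr (subsetUr _ _)) (negbTE Ai_neq0).
rewrite /move_pts /merge_blocks Aij_Ai (negbTE (partition_neq0 cA A_Aj)) setU1K //.
apply/setP => X; rewrite !inE.
case: (X =P Ai) => [->|_]; first by rewrite A_Ai orbT.
case: (X =P Aj) => [->|_]; first by rewrite A_Aj orbT.
by rewrite /= !orbF.
Qed.

End TwoBlocks.

Hypothesis T_gt0 : (0 < #|T|)%N.

Definition one_block : {set {set T}} := [set [set: T]].

Lemma setT_neq0 : [set: T] != set0.
Proof. by rewrite -card_gt0 cardsT. Qed.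

Lemma clustering_one_block : clustering one_block.
Proof.
rewrite /clustering /partition cover1 eqxx inE eq_sym setT_neq0 andbT /=.
by apply/trivIsetP => X Y; rewrite !inE => /eqP -> /eqP ->; rewrite eqxx.
Qed.

Lemma clustering_card_le1 A : clustering A -> (#|A| <= 1)%N -> A = one_block.
Proof.
move=> cA A_le1; have cover_A := cover_partition cA.
have /cards1P[X A_X] : #|A| == 1%N.
  rewrite eqn_leq A_le1 card_gt0; apply: contra_neq setT_neq0 => A0.
  by rewrite -cover_A A0 /cover big_set0.
by move: cover_A; rewrite A_X cover1 => ->.
Qed.

Lemma reachable_one_block A : clustering A -> reachable A one_block.
Proof.
have [n] := ubnP #|A|; elim: n A => // n IH A /ltnSE A_le cA.
have [A_le1|/card_gt1P[Ai [Aj [A_Ai A_Aj neq_ij]]]] := leqP #|A| 1.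
  by rewrite (clustering_card_le1 cA A_le1); exact: reachable_refl.
have cM := clustering_merge cA A_Ai A_Aj neq_ij.
apply: (reachable_trans cA cM); last first.
  exact: IH (leq_trans (card_merge_lt A_Ai A_Aj neq_ij) A_le) cM.
apply: (reachable_step cM); rewrite -move_pts_merge phiY_move_gt0 //.
- by rewrite card_gt0 (partition_neq0 cA A_Ai).
- by rewrite /= !inE eq_sym neq_ij.
Qed.

Lemma one_block_reachable A : clustering A -> reachable one_block A.
Proof.
have [n] := ubnP #|A|; elim: n A => // n IH A /ltnSE A_le cA.
have [A_le1|/card_gt1P[Ai [Aj [A_Ai A_Aj neq_ij]]]] := leqP #|A| 1.
  by rewrite (clustering_card_le1 cA A_le1); exact: reachable_refl.
have cM := clustering_merge cA A_Ai A_Aj neq_ij.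
apply: (reachable_trans clustering_one_block cM).
  exact: IH (leq_trans (card_merge_lt A_Ai A_Aj neq_ij) A_le) cM.
apply: (reachable_step cA); rewrite -{2}(move_pts_split cA A_Ai A_Aj neq_ij).
by rewrite phiY_move_gt0 ?setU11 ?subsetUr ?card_gt0 ?(partition_neq0 cA A_Ai).
Qed.

End Kernel.

Theorem lemma19 (R : realType) (theta1 : R) (T : finType) :
  0 < theta1 -> (0 < #|T|)%N ->
  forall A A' : {set {set T}}, clustering A -> clustering A' ->
  exists m : nat, 0 < phiY_n theta1 m A A'.
Proof.
move=> theta_gt0 T_gt0 A A' cA cA'.
suff : reachable theta1 A A' by [].
apply: (reachable_trans theta_gt0 cA (clustering_one_block T_gt0)).
- exact: reachable_one_block theta_gt0 T_gt0 _ cA.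
- exact: one_block_reachable theta_gt0 T_gt0 _ cA'.
Qed.
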